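(* Let $t\ge 2$ be an integer and let $G$ be a finite simple graph. Then \[ N(G,K_t)\;\le\;\sum_{e\in E(G)}\frac{\binom{p(e)+1}{t}}{\binom{p(e)+1}{2}}\;=\;\frac{1}{\binom{t}{2}}\sum_{e\in E(G)}\binom{p(e)-1}{t-2}. \] If $t=2$, equality always holds. If $t\ge 3$, equality holds if and only if every connected component of $G$ is either a complete graph or contains no path of length $t-1$.
   Context: $N(G,K_t)$ denotes the number of subgraphs of $G$ isomorphic to $K_t$. The length of a path is its number of edges. For an edge $e\in E(G)$, $p(e)$ denotes the length of a longest path in $G$ containing the edge $e$ (so $p(e)\ge 1$). Binomial coefficients $\binom{a}{b}$ with $0\le a<b$ are $0$. *)

From mathcomp Require Import all_boot all_order all_algebra.
Set Implicit Arguments. Unset Strict Implicit. Unset Printing Implicit Defensive.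

Section Graphs.
Variables (T : finType) (g : rel T).

Definition simple_graph : Prop := symmetric g /\ irreflexive g.

Definition edges : {set {set T}} :=
  [set [set x; y] | x in T, y in T & g x y].

(* A path is a sequence of pairwise distinct vertices, consecutive ones
   adjacent; its length is its number of edges (= number of vertices - 1). *)
Definition is_gpath (s : seq T) : bool :=
  match s with
  | [::] => false
  | x :: s' => path g x s' && uniq s
  end.

Definition path_has_edge (s : seq T) (E : {set T}) : bool :=
  has (fun pr => [set pr.1; pr.2] == E) (zip s (behead s)).

Definition has_path_with (k : nat) (E : {set T}) : bool :=
  [exists s : k.+1.-tuple T, is_gpath s && path_has_edge s E].

(* p(E): length of a longest path containing E (paths have length < #|T|). *)
Definition plong (E : {set T}) : nat :=
  \max_(k < #|T|) (if has_path_with k E then (k : nat) else 0%N).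

(* Cliques; N(G, K_t) = number of vertex sets of size t inducing a complete
   graph (a copy of K_t in G is determined by its vertex set). *)
Definition is_clique (S : {set T}) : bool :=
  [forall x in S, forall y in S, (x != y) ==> g x y].

Definition NK (t : nat) : nat :=
  #|[set S : {set T} | (#|S| == t) && is_clique S]|.

Definition component (x : T) : {set T} := [set y | connect g x y].

Definition has_path_in (C : {set T}) (k : nat) : bool :=
  [exists s : k.+1.-tuple T, is_gpath s && all (fun v => v \in C) s].

End Graphs.

From mathcomp Require Import all_boot all_order all_algebra zify.
Set Implicit Arguments. Unset Strict Implicit. Unset Printing Implicit Defensive.

(* Induction on the number of edges. Let P be a longest path, with m vertices,
   and v an end of P. Every neighbour w of v lies on P, and rotating P at w
   gives a longest path through vw, so p(vw) >= m - 1. If d = deg v <= m/2,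
   the K_t's through v number at most C(d, t-1), and the estimate
   C(t,2) C(d,t-1) <= d C(m-2,t-2) lets the edges at v pay for them; delete v.
   For t >= 3 this is strict, and the component of v is then neither complete
   nor free of paths of length t-1. Otherwise both ends of P have degree
   > m/2, so two crossing chords close P into a cycle; P being longest, its
   vertex set H is a whole component in which every edge has p(e) = |H| - 1,
   and double counting pairs (edge, K_t) inside H gives
   C(t,2) N(H, K_t) <= e(H) C(|H|-2, t-2), with equality iff H is complete.
   The two sums agree termwise as C(p+1,t) C(t,2) = C(p+1,2) C(p-1,t-2). *)

Section Paths.
Variables (T : finType) (g : rel T).
Implicit Types (x y v w : T) (s q r : seq T) (E : {set T}).

Lemma gpath_cons x s : is_gpath g (x :: s) = path g x s && uniq (x :: s).
Proof. by []. Qed.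

Lemma size_gpath s : is_gpath g s -> 0 < size s <= #|T|.
Proof.
case: s => // x s /andP[_ U]; apply/andP; split => //.
by rewrite -(card_uniqP U) max_card.
Qed.

Lemma leq_gpath_plong s E :
  is_gpath g s -> path_has_edge s E -> (size s).-1 <= plong g E.
Proof.
move=> gs hs; have /andP[s0 sT] := size_gpath gs.
have kT : (size s).-1 < #|T| by rewrite prednK.
have Hs : size s == ((size s).-1).+1 by rewrite prednK.
have hp : has_path_with g (size s).-1 E.
  by apply/existsP; exists (Tuple Hs); rewrite /= gs hs.
by apply: leq_trans (leq_bigmax (Ordinal kT)); rewrite /= hp.
Qed.

Lemma plong_leq E m :
  (forall s, is_gpath g s -> path_has_edge s E -> (size s).-1 <= m) ->
  plong g E <= m.
Proof.
move=> hE; apply/bigmax_leqP => k _; case: ifP => // /existsP[u /andP[gu hu]].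
by have := hE u gu hu; rewrite size_tuple.
Qed.

Lemma gpath_take s k : is_gpath g s -> 0 < k -> is_gpath g (take k s).
Proof.
case: s => // x s /andP[p u]; case: k => // k _.
have -> : take k.+1 (x :: s) = x :: take k s by [].
by rewrite gpath_cons take_path //; exact: (take_uniq k.+1 u).
Qed.

Lemma has_path_in_gpath (C : {set T}) k s :
  is_gpath g s -> k < size s -> {subset s <= C} -> has_path_in g C k.
Proof.
move=> gs ks sC; have gt : is_gpath g (take k.+1 s) by exact: gpath_take.
have st : size (take k.+1 s) == k.+1 by rewrite size_takel.
apply/existsP; exists (Tuple st); rewrite /= gt; apply/allP => x /mem_take.
exact: sC.
Qed.

Lemma exists_longest_gpath x0 :
  exists2 P, is_gpath g P & forall q, is_gpath g q -> size q <= size P.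
Proof.
pose Pk k := [exists u : k.+1.-tuple T, is_gpath g u].
have exP : exists k, Pk k by exists 0; apply/existsP; exists [tuple x0].
have ubP k : Pk k -> k <= #|T|.
  by case/existsP=> u /size_gpath/andP[_]; rewrite size_tuple; lia.
case: (ex_maxnP exP ubP) => m /existsP[u gu] mx.
exists u => // q gq; rewrite size_tuple.
have /andP[q0 _] := size_gpath gq.
suff : (size q).-1 <= m by lia.
apply: mx; apply/existsP; have Hs : size q == (size q).-1.+1 by rewrite prednK.
by exists (Tuple Hs).
Qed.

Lemma gpath_cycle c : c != [::] -> cycle g c -> uniq c -> is_gpath g c.
Proof. by case: c => // x r _ /=; rewrite rcons_path => /andP[-> _] ->. Qed.

Lemma path_has_edge_cons s a E :
  path_has_edge s E -> path_has_edge (a :: s) E.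
Proof. by case: s => //= y s; rewrite /path_has_edge /= => ->; rewrite orbT. Qed.

Lemma path_has_edge_cat s1 x y s2 : path_has_edge (s1 ++ x :: y :: s2) [set x; y].
Proof.
elim: s1 => [|a s1 IH] /=; first by rewrite /path_has_edge /= eqxx.
exact: path_has_edge_cons.
Qed.

Lemma path_has_edge_mem s E : path_has_edge s E -> exists2 x, x \in s & x \in E.
Proof.
elim: s => // a s IH; case: s IH => // b s IH.
rewrite /path_has_edge /= => /orP[/eqP <-|h]; first by exists a; rewrite !inE eqxx.
by case: (IH h) => x xs xE; exists x => //; rewrite inE xs orbT.
Qed.

(* [path] without a distinguished head, so that paths can be cut and glued. *)
Definition chain s := if s is x :: s' then path g x s' else true.

Lemma gpathE s : is_gpath g s = (s != [::]) && chain s && uniq s.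
Proof. by case: s. Qed.

Lemma chain_cat q y r :
  chain (q ++ y :: r) = [&& chain q, (q == [::]) || g (last y q) y & chain (y :: r)].
Proof. by case: q => [|x q] //=; rewrite cat_path /= andbA. Qed.

Lemma chain_path x q : path g x q -> chain q.
Proof. by case: q => //= y q /andP[]. Qed.

Lemma path_chainE x q : path g x q = chain q && ((q == [::]) || g x (head x q)).
Proof. by case: q => //= y q; rewrite andbC. Qed.

Lemma head_rev x q : head x (rev q) = last x q.
Proof. by case/lastP: q => // q y; rewrite rev_rcons last_rcons. Qed.

Hypothesis sg : symmetric g.

Lemma chain_rev s : chain (rev s) = chain s.
Proof.
case: s => // x s; rewrite lastI rev_rcons /= -lastI rev_path.
by apply: eq_path => a b; rewrite sg.
Qed.

Lemma gpath_rev s : is_gpath g (rev s) = is_gpath g s.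
Proof. by rewrite !gpathE chain_rev rev_uniq -!size_eq0 size_rev. Qed.

Lemma posa_rotation v s1 w s2 : is_gpath g (v :: s1 ++ w :: s2) -> g v w ->
  is_gpath g (rev (v :: s1) ++ w :: s2) /\
  path_has_edge (rev (v :: s1) ++ w :: s2) [set v; w].
Proof.
rewrite !gpathE /= => /andP[p u] vw; split; last first.
  by rewrite rev_cons cat_rcons; apply: path_has_edge_cat.
have -> : (rev (v :: s1) ++ w :: s2 != [::]) by case: (rev _).
have -> : uniq (rev (v :: s1) ++ w :: s2).
  by rewrite (perm_uniq (_ : perm_eq _ ((v :: s1) ++ w :: s2))) // perm_cat2r perm_rev.
rewrite andbT /= chain_cat chain_rev //= rev_cons last_rcons vw orbT.
by move: p; rewrite cat_path /= => /and3P[-> _ ->].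
Qed.

Lemma cycle_chord_gpath x r y : cycle g (x :: r) -> uniq (x :: r) ->
  y \in r -> g x y ->
  exists q, [/\ is_gpath g q, size q = size (x :: r) & path_has_edge q [set x; y]].
Proof.
move=> cy u yr xy; case/splitPr: yr cy u => A B.
rewrite /= rcons_path cat_path last_cat /= => /andP[/and3P[pA lAy pB] lBx] u.
exists (A ++ y :: x :: rev B); split.
- rewrite gpathE; have -> : (A ++ y :: x :: rev B != [::]) by case: (A).
  have -> /= : uniq (A ++ y :: x :: rev B).
    rewrite -(perm_uniq (s1 := x :: A ++ y :: B)) //.
    apply/permP => p; rewrite /= !count_cat /= count_rev; lia.
  rewrite andbT chain_cat (chain_path pA) /= (sg y x) xy /=.
  have -> : (A == [::]) || g (last y A) y.
    by move: lAy; case: (A) => //= ? ? ->; rewrite orbT.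
  have : chain (rev (rcons (y :: B) x)) by rewrite chain_rev //= rcons_path pB lBx.
  by rewrite rev_rcons /= rev_cons rcons_path => /andP[].
- by rewrite !size_cat /= size_rev; lia.
- by rewrite setUC; apply: path_has_edge_cat.
Qed.

Lemma gpath_cons_cycle y r z : cycle g (y :: r) -> uniq (y :: r) ->
  z \notin y :: r -> g y z -> is_gpath g (z :: y :: r).
Proof.
move=> cy u zn yz; rewrite gpath_cons cons_uniq zn u /= (sg z y) yz andbT.
by move: cy; rewrite /= rcons_path => /andP[].
Qed.

Lemma cycle_rot_to c x : cycle g c -> uniq c -> x \in c ->
  exists r, [/\ cycle g (x :: r), uniq (x :: r), size (x :: r) = size c & x :: r =i c].
Proof.
move=> cy u xc; case: (rot_to xc) => i r e; exists r.
by rewrite -e rot_cycle rot_uniq size_rot; split => // z; rewrite mem_rot.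
Qed.

Lemma last_take x s i : i <= size s -> last x (take i s) = nth x (x :: s) i.
Proof.
elim: s x i => [|y s IH] x [|i] //= hi.
by rewrite IH // (set_nth_default x).
Qed.

(* Writing [v :: s] as [s_0 .. s_m], the cycle is [s_0 .. s_i s_m .. s_(i+1)]. *)
Lemma crossing_edges_cycle v s i : is_gpath g (v :: s) -> i < size s ->
  g v (nth v (v :: s) i.+1) -> g (nth v (v :: s) i) (last v s) ->
  exists c, cycle g c /\ perm_eq c (v :: s).
Proof.
rewrite gpathE /= => /andP[ps _] lti h1 h2.
rewrite -(last_take v (ltnW lti)) in h2.
have e1 : nth v s i = head v (drop i s) by rewrite -nth0 nth_drop addn0.
rewrite e1 in h1.
have e2 : last v s = last (last v (take i s)) (drop i s).
  by rewrite -last_cat cat_take_drop.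
rewrite e2 in h2.
have hb : drop i s != [::] by rewrite -size_eq0 size_drop subn_eq0 -ltnNge.
move: ps; rewrite -{1}[s](cat_take_drop i) cat_path => /andP[pa pb].
exists (v :: take i s ++ rev (drop i s)); split; last first.
  rewrite perm_cons; apply/permP => p.
  by rewrite count_cat count_rev -count_cat cat_take_drop.
case E: (drop i s) hb h1 h2 pb => [|w b'] // _ vw hlast pb.
rewrite /= rcons_path cat_path pa /= last_cat.
have -> : last (last v (take i s)) (rev (w :: b')) = w by rewrite -head_rev revK.
rewrite (sg w v) vw andbT path_chainE chain_rev // (chain_path pb) /=.
by rewrite head_rev hlast orbT.
Qed.

End Paths.

Section LongestPath.
Variables (T : finType) (g : rel T).
Hypotheses (sg : symmetric g) (ir : irreflexive g).
Implicit Types (x y v w : T) (s q r c : seq T).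

Definition nbr v := [set w | g v w].

Lemma longest_cycle_closed c x y : cycle g c -> uniq c ->
  (forall q, is_gpath g q -> size q <= size c) -> x \in c -> g x y -> y \in c.
Proof.
move=> cy uc lg xc xy; apply/negPn/negP => yc.
have [r [cy' u' sz me]] := cycle_rot_to cy uc xc.
have /lg/= : is_gpath g (y :: x :: r) by apply: gpath_cons_cycle; rewrite ?me.
by rewrite -sz /=; lia.
Qed.

Lemma plong_longest_cycle c x y : cycle g c -> uniq c ->
  (forall q, is_gpath g q -> size q <= size c) -> x \in c -> g x y ->
  plong g [set x; y] = (size c).-1.
Proof.
move=> cy uc lg xc xy; apply/eqP; rewrite eqn_leq; apply/andP; split.
  by apply: plong_leq => q gq _; have := lg q gq; lia.
have [r [cy' u' <- me]] := cycle_rot_to cy uc xc.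
have yr : y \in r.
  have : y \in x :: r by rewrite me (longest_cycle_closed cy uc lg xc xy).
  by rewrite inE => /orP[/eqP e|//]; move: xy; rewrite e ir.
have [q [gq <- hq]] := cycle_chord_gpath sg cy' u' yr xy.
exact: leq_gpath_plong gq hq.
Qed.

Variables (v : T) (s : seq T).
Hypotheses (gP : is_gpath g (v :: s))
           (longest : forall q, is_gpath g q -> size q <= (size s).+1).

Lemma longest_first_nbr w : g v w -> w \in s.
Proof.
move=> vw; apply/negPn/negP => ws.
have wv : w != v by apply/eqP => e; move: vw; rewrite e ir.
have /longest/= : is_gpath g (w :: v :: s).
  move: gP; rewrite !gpath_cons => /andP[p u].
  by rewrite cons_uniq u andbT /= (sg w v) vw p inE negb_or wv ws.
lia.
Qed.

Lemma longest_last_nbr w : g (last v s) w -> w \in v :: s.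
Proof.
move=> uw; apply/negPn/negP => ws.
have /longest : is_gpath g (rcons (v :: s) w).
  move: gP; rewrite !gpath_cons => /andP[p u].
  by rewrite -rcons_cons rcons_uniq ws u andbT rcons_path p uw.
by rewrite size_rcons /=; lia.
Qed.

Lemma plong_longest_first_edge w : g v w -> size s <= plong g [set v; w].
Proof.
move=> vw; have := gP; case/splitPr: (longest_first_nbr vw) => s1 s2 gP'.
have [gq hq] := posa_rotation sg gP' vw; have := leq_gpath_plong gq hq.
by rewrite !size_cat size_rev /=; lia.
Qed.

(* Dirac-type closing: two ends of high degree force two crossing edges. *)
Lemma longest_gpath_cycle :
  (size s).+1 < 2 * #|nbr v| -> (size s).+1 < 2 * #|nbr (last v s)| ->
  exists c, cycle g c /\ perm_eq c (v :: s).
Proof.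
move=> dv du.
pose A := [set i : 'I_(size s) | g v (nth v (v :: s) i.+1)].
pose B := [set i : 'I_(size s) | g (nth v (v :: s) i) (last v s)].
have hA : #|nbr v| <= #|A|.
  apply: leq_trans (leq_imset_card (fun i : 'I_(size s) => nth v (v :: s) i.+1) A).
  apply: subset_leq_card; apply/subsetP => w; rewrite inE => vw.
  have ws := longest_first_nbr vw.
  have ik : index w s < size s by rewrite index_mem.
  by apply/imsetP; exists (Ordinal ik); rewrite ?inE /= nth_index.
have hB : #|nbr (last v s)| <= #|B|.
  apply: leq_trans (leq_imset_card (fun i : 'I_(size s) => nth v (v :: s) i) B).
  apply: subset_leq_card; apply/subsetP => w; rewrite inE => uw.
  have ws := longest_last_nbr uw.
  have ik : index w (v :: s) < size s.
    have : index w (v :: s) < size (v :: s) by rewrite index_mem.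
    rewrite ltnS leq_eqVlt => /orP[/eqP e|//].
    have := nth_index v ws; rewrite e.
    have -> : nth v (v :: s) (size s) = last v s.
      by rewrite -[size s]/((size (v :: s)).-1) nth_last.
    by move=> ew; move: uw; rewrite -ew ir.
  by apply/imsetP; exists (Ordinal ik); rewrite ?inE /= nth_index // sg.
have : 0 < #|A :&: B|.
  by have := cardsU A B; have := max_card (A :|: B); rewrite card_ord; lia.
case/card_gt0P => i; rewrite !inE => /andP[h1 h2].
by have := crossing_edges_cycle sg gP (ltn_ord i); apply.
Qed.

End LongestPath.

Section Subgraphs.
Variable T : finType.
Implicit Types (g : rel T) (x y v w : T) (s q : seq T) (A H S E : {set T}).

Lemma gpath_subrel g g' s : subrel g' g -> is_gpath g' s -> is_gpath g s.
Proof.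
by move=> sub; case: s => // x s /andP[p u]; rewrite gpath_cons u (sub_path sub p).
Qed.

Lemma plong_subrel g g' E : subrel g' g -> plong g' E <= plong g E.
Proof.
move=> sub; apply: plong_leq => s gs hs; apply: leq_gpath_plong hs.
exact: gpath_subrel gs.
Qed.

Definition restrict g A : rel T := fun x y => [&& g x y, x \in A & y \in A].

Definition cliques g t := [set S : {set T} | (#|S| == t) && is_clique g S].

Definition cliques_at g t v := [set S in cliques g t | v \in S].

Lemma NKE g t : NK g t = #|cliques g t|. Proof. by []. Qed.

Lemma edgesP g E : reflect (exists x y, g x y /\ E = [set x; y]) (E \in edges g).
Proof.
apply: (iffP idP) => [/imset2P[x y _ + ->]|[x [y [xy ->]]]].
  by rewrite inE => xy; exists x, y.
by apply: (imset2_f (fun x y => [set x; y])) => //; rewrite inE.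
Qed.

Lemma card_edge g E : irreflexive g -> E \in edges g -> #|E| = 2.
Proof.
move=> ir /edgesP[x [y [xy ->]]]; rewrite cards2; case: eqP xy => // ->.
by rewrite ir.
Qed.

Lemma plong_edge_gt0 g E : irreflexive g -> E \in edges g -> 0 < plong g E.
Proof.
move=> ir /edgesP[x [y [xy ->]]].
have xny : x != y by apply/eqP => e; move: xy; rewrite e ir.
apply: leq_gpath_plong (_ : is_gpath g [:: x; y]) _.
  by rewrite /= xy inE xny.
by rewrite /path_has_edge /= eqxx.
Qed.

Lemma cliqueP g S :
  reflect (forall x y, x \in S -> y \in S -> x != y -> g x y) (is_clique g S).
Proof.
apply: (iffP forall_inP) => [h x y xS yS xy|h x xS].
  by move: (h x xS) => /forall_inP/(_ y yS)/implyP; apply.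
by apply/forall_inP => y yS; apply/implyP; apply: h.
Qed.

Lemma restrict_sub g A : subrel (restrict g A) g.
Proof. by move=> x y /and3P[]. Qed.

Lemma restrict_sym g A : symmetric g -> symmetric (restrict g A).
Proof. by move=> sg x y; rewrite /restrict sg [(x \in A) && _]andbC. Qed.

Lemma restrict_irr g A : irreflexive g -> irreflexive (restrict g A).
Proof. by move=> ir x; rewrite /restrict ir. Qed.

Lemma clique_restrict g A S :
  S \subset A -> is_clique (restrict g A) S = is_clique g S.
Proof.
move=> /subsetP sA; apply/cliqueP/cliqueP => h x y xS yS xy.
  exact: restrict_sub (h x y xS yS xy).
by rewrite /restrict h // !sA.
Qed.

Lemma clique_set1 g x : is_clique g [set x].
Proof. by apply/cliqueP => a b; rewrite !inE => /eqP-> /eqP->; rewrite eqxx. Qed.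

Lemma edge_through g E v : symmetric g -> E \in edges g -> v \in E ->
  exists w, g v w /\ E = [set v; w].
Proof.
move=> sg /edgesP[x [y [xy ->]]]; rewrite !inE => /orP[]/eqP->; first by exists y.
by exists x; rewrite sg setUC.
Qed.

Lemma NK_edges g : symmetric g -> irreflexive g -> NK g 2 = #|edges g|.
Proof.
move=> sg ir; rewrite NKE; apply: eq_card => S; rewrite inE.
apply/andP/idP => [[/cards2P[x [y [xy ->]]] c]|Se].
  apply/edgesP; exists x, y; split => //; move/cliqueP: c; apply => //;
    by rewrite !inE eqxx ?orbT.
split; first by rewrite (card_edge ir Se).
case/edgesP: Se => x [y [xy ->]]; apply/cliqueP => a b; rewrite !inE.
by case/orP=> /eqP-> /orP[]/eqP->; rewrite ?eqxx // => _; rewrite // sg.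
Qed.

Lemma exists_other S x : 2 <= #|S| -> exists2 y, y \in S & y != x.
Proof.
move=> c2; have : 0 < #|S :\ x|.
  by move: c2; rewrite (cardsD1 x S); case: (x \in S) => /=; lia.
by case/card_gt0P => y; rewrite !inE => /andP[yx yS]; exists y.
Qed.

Lemma clique_restrict_subset g A S :
  2 <= #|S| -> is_clique (restrict g A) S -> S \subset A.
Proof.
move=> c2 /cliqueP h; apply/subsetP => x xS.
have [y yS yx] := exists_other x c2.
have xy : x != y by rewrite eq_sym.
by case/and3P: (h x y xS yS xy).
Qed.

Lemma edges_restrict g A : edges (restrict g A) = [set E in edges g | E \subset A].
Proof.
apply/setP => E; rewrite inE; apply/edgesP/andP.
  case=> x [y [/and3P[xy xA yA] ->]]; split; first by apply/edgesP; exists x, y.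
  by apply/subsetP => z; rewrite !inE => /orP[]/eqP->.
case=> /edgesP[x [y [xy ->]]] /subsetP s; exists x, y; split => //.
by rewrite /restrict xy !s // !inE eqxx ?orbT.
Qed.

Lemma path_restrict g A x s : all [in A] (x :: s) ->
  path (restrict g A) x s = path g x s.
Proof.
elim: s x => // y s IH x /= /and3P[xA yA al].
by rewrite /restrict xA yA !andbT IH //= yA.
Qed.

Lemma cycle_restrict g A c : {subset c <= A} -> cycle (restrict g A) c = cycle g c.
Proof.
case: c => // x r sub; rewrite /= path_restrict //; apply/allP => y.
by rewrite -rcons_cons mem_rcons inE => /orP[/eqP->|]; apply: sub; rewrite ?mem_head.
Qed.

Lemma has_path_in_restrict g A (C : {set T}) k : C \subset A ->
  has_path_in (restrict g A) C k = has_path_in g C k.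
Proof.
move=> /subsetP CA; apply/existsP/existsP => -[u /andP[gu al]]; exists u.
  by rewrite al andbT; exact: gpath_subrel (@restrict_sub g A) gu.
rewrite al andbT; case: (tval u) gu al => // x s.
rewrite !gpath_cons => /andP[p ->] al; rewrite andbT path_restrict //.
by apply/allP => y /(allP al)/CA.
Qed.

Lemma component_isolated g x : g x =1 xpred0 -> component g x = [set x].
Proof.
move=> gx; apply/setP => y; rewrite !inE.
apply/idP/idP => [/connectP[[|z p] /=]|/eqP->]; last exact: connect0.
  by move=> _ ->.
by rewrite gx.
Qed.

Lemma component_restrict_notin g A x : x \notin A ->
  component (restrict g A) x = [set x].
Proof.
by move=> xA; apply: component_isolated => y; rewrite /restrict (negbTE xA) andbF.
Qed.

Lemma NK_setC1 g t v : 2 <= t ->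
  NK g t = NK (restrict g [set~ v]) t + #|cliques_at g t v|.
Proof.
move=> t2; rewrite !NKE /cliques_at.
rewrite -(cardsID [set S : {set T} | v \in S] (cliques g t)) addnC.
congr (_ + _); apply: eq_card => S; rewrite !inE; last by rewrite andbC.
case vS: (v \in S); rewrite /= ?andbF ?andbT.
  apply/esym/negbTE/andP => -[/eqP St /(clique_restrict_subset _)].
  by rewrite St => /(_ t2)/subsetP/(_ v vS); rewrite !inE eqxx.
rewrite clique_restrict //; apply/subsetP => x xS; rewrite !inE.
by apply/eqP => xv; rewrite -xv xS in vS.
Qed.

Lemma card_cliques_at g t v : 1 <= t ->
  #|cliques_at g t v| <= 'C(#|nbr g v|, t.-1).
Proof.
move=> t1; rewrite -cards_draws /cliques_at.
rewrite -(@card_in_imset _ _ (fun S => S :\ v)); last first.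
  move=> S1 S2; rewrite !inE => /andP[_ v1] /andP[_ v2] e.
  by rewrite -(setD1K v1) -(setD1K v2) e.
apply: subset_leq_card; apply/subsetP => B /imsetP[S]; rewrite !inE.
move=> /andP[/andP[/eqP St /cliqueP cl] vS] ->; apply/andP; split.
  apply/subsetP => x; rewrite !inE => /andP[xv xS]; apply: cl => //.
  by rewrite eq_sym.
by move: St; rewrite (cardsD1 v S) vS => <-.
Qed.

Lemma card_edges_at g v : symmetric g -> irreflexive g ->
  #|[set E in edges g | v \in E]| = #|nbr g v|.
Proof.
move=> sg ir.
have -> : [set E in edges g | v \in E] = [set [set v; w] | w in nbr g v].
  apply/setP => E; rewrite inE; apply/andP/imsetP.
    case=> /edgesP[x [y [xy ->]]]; rewrite !inE => /orP[]/eqP->.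
      by exists y; rewrite ?inE.
    by exists x; rewrite ?inE 1?sg // setUC.
  case=> w; rewrite inE => vw ->; split; last by rewrite !inE eqxx.
  by apply/edgesP; exists v, w.
apply: card_in_imset => w1 w2; rewrite !inE => v1 v2 e.
have : w1 \in [set v; w2] by rewrite -e !inE eqxx orbT.
by rewrite !inE => /orP[/eqP e1|/eqP //]; rewrite e1 ir in v1.
Qed.

Lemma clique_path g S x s : is_clique g S -> uniq (x :: s) ->
  all [in S] (x :: s) -> path g x s.
Proof.
move=> /cliqueP c; elim: s x => // y s IH x /= /andP[/norP[xy _] /andP[ys u]].
by case/and3P=> xS yS al; rewrite c // IH //= ?ys ?u ?yS.
Qed.

Lemma clique_enum_gpath g S : 0 < #|S| -> is_clique g S -> is_gpath g (enum S).
Proof.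
rewrite cardE; case eS: (enum S) (enum_uniq S) => [|x r] // u _ c.
rewrite gpath_cons u andbT; apply: clique_path c u _.
by apply/allP => z; rewrite -eS mem_enum.
Qed.

Definition arcs g := [set p : T * T | g p.1 p.2].

Lemma card_arcs_restrict g A x y :
  g x y -> x \notin A -> #|arcs (restrict g A)| < #|arcs g|.
Proof.
move=> xy xA; apply: proper_card; apply/properP; split.
  by apply/subsetP => -[a b]; rewrite !inE => /and3P[].
by exists (x, y); rewrite !inE //= /restrict (negbTE xA) andbF.
Qed.

Section ClosedSplit.
Variables (g : rel T) (H : {set T}).
Hypothesis clH : closed g H.

Lemma closed_setC : closed g (~: H).
Proof. by move=> x y /clH; rewrite !inE => ->. Qed.

Lemma path_restrict_closed x p : x \in H -> path g x p -> path (restrict g H) x p.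
Proof.
elim: p x => // y p IH x xH /= /andP[xy pp].
have yH : y \in H by rewrite -(clH xy).
by rewrite /restrict xy xH yH IH.
Qed.

Lemma gpath_restrict_closed q x :
  is_gpath g q -> x \in q -> x \in H -> is_gpath (restrict g H) q.
Proof.
case: q => // y q /andP[p u] xq xH; rewrite gpath_cons u andbT.
have yH : y \in H by rewrite (closed_connect clH (path_connect p xq)).
exact: path_restrict_closed p.
Qed.

Lemma plong_restrict_closed E : E \subset H -> plong (restrict g H) E = plong g E.
Proof.
move=> EH; apply/eqP; rewrite eqn_leq plong_subrel ?andbT; last exact: restrict_sub.
apply: plong_leq => q gq hq; have [x xq xE] := path_has_edge_mem hq.
exact: leq_gpath_plong (gpath_restrict_closed gq xq (subsetP EH x xE)) hq.
Qed.

Lemma component_restrict_closed x :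
  x \in H -> component (restrict g H) x = component g x.
Proof.
move=> xH; apply/setP => y; rewrite !inE; apply/idP/idP.
  by apply: connect_sub => a b /restrict_sub; apply: connect1.
by case/connectP=> p /(path_restrict_closed xH) p' ->; apply/connectP; exists p.
Qed.

Lemma component_closed x : x \in H -> component g x \subset H.
Proof. by move=> xH; apply/subsetP => y; rewrite inE => /(closed_connect clH) <-. Qed.

Lemma clique_split S : 2 <= #|S| -> is_clique g S ->
  is_clique (restrict g H) S || is_clique (restrict g (~: H)) S.
Proof.
move=> c2 cl.
have [x xS] : exists x, x \in S by apply/set0Pn; rewrite -card_gt0; lia.
suff [sub|sub] : S \subset H \/ S \subset ~: H.
- by rewrite clique_restrict // cl.
- by rewrite orbC clique_restrict // cl.
have same y : y \in S -> (y \in H) = (x \in H).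
  move=> yS; case: (eqVneq y x) => [-> //|yx].
  exact: clH ((cliqueP _ _ cl) y x yS xS yx).
case xH: (x \in H); [left|right]; apply/subsetP => y yS; rewrite ?inE same ?xH //.
Qed.

Lemma NK_restrict_closed t : 2 <= t ->
  NK g t = NK (restrict g H) t + NK (restrict g (~: H)) t.
Proof.
move=> t2; rewrite !NKE -cardsUI.
have -> : cliques (restrict g H) t :&: cliques (restrict g (~: H)) t = set0.
  apply/setP => S; rewrite !inE; apply/negP.
  move=> /andP[/andP[/eqP St /clique_restrict_subset cH]
                /andP[_ /clique_restrict_subset cC]].
  have : S \subset H :&: ~: H by rewrite subsetI cH ?cC // St.
  by rewrite setICr subset0 => /eqP S0; move: St; rewrite S0 cards0; lia.
rewrite cards0 addn0; apply: eq_card => S; rewrite !inE -andb_orr.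
case: eqP => //= St; apply/idP/idP => [|/orP[] cl].
- by apply: clique_split; rewrite St.
- by rewrite -(clique_restrict _ (clique_restrict_subset _ cl)) // St.
- by rewrite -(clique_restrict _ (clique_restrict_subset _ cl)) // St.
Qed.

Lemma big_edges_restrict_closed (F : {set T} -> nat) :
  \sum_(E in edges g) F E =
  \sum_(E in edges (restrict g H)) F E + \sum_(E in edges (restrict g (~: H))) F E.
Proof.
rewrite (bigID (fun E => E \subset H)) /= !edges_restrict; congr (_ + _).
  by apply: eq_bigl => E; rewrite inE.
apply: eq_bigl => E; rewrite inE; case Ee: (E \in edges g) => //=.
case/edgesP: Ee => x [y [xy ->]]; rewrite !subUset !sub1set !inE -(clH xy).
by case: (x \in H).
Qed.

End ClosedSplit.

End Subgraphs.

Lemma subset_card_between (T : finType) (B A : {set T}) k :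
  B \subset A -> #|B| <= k -> k <= #|A| ->
  exists S : {set T}, [/\ B \subset S, S \subset A & #|S| = k].
Proof.
move=> BA; move: k; suff h : forall j, #|B| + j <= #|A| ->
    exists S : {set T}, [/\ B \subset S, S \subset A & #|S| = #|B| + j].
  by move=> k bk kA; have := h (k - #|B|); rewrite subnKC //; apply.
elim=> [|j IH] hj; first by exists B; rewrite addn0.
have [|S [BS SA cS]] := IH; first lia.
have : ~~ (A \subset S) by apply/negP => /subset_leq_card; lia.
case/subsetPn => x xA xS; exists (x |: S); split.
- exact: subset_trans BS (subsetUr _ _).
- by rewrite subUset sub1set xA.
- by rewrite cardsU1 xS cS addnS.
Qed.

Lemma card_set_sum (U : finType) (A : {set U}) (P : pred U) :
  #|[set x in A | P x]| = \sum_(x in A) P x.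
Proof.
rewrite -sum1_card (eq_bigl (fun x => (x \in A) && P x)) => [|x]; last by rewrite inE.
by rewrite big_mkcondr; apply: eq_bigr => x _; case: (P x).
Qed.

Section DoubleCounting.
Variables (T : finType) (g : rel T) (H : {set T}) (t : nat).
Hypotheses (sg : symmetric g) (ir : irreflexive g) (t2 : 2 <= t).
Hypothesis inH : forall x y, g x y -> x \in H.
Implicit Types (E S : {set T}).

Definition cliques_through E := [set S in cliques g t | E \subset S].

Definition tsets_through E :=
  [set S : {set T} | [&& E \subset S, S \subset H & #|S| == t]].

Lemma clique_subset_support S : #|S| = t -> is_clique g S -> S \subset H.
Proof.
move=> St /cliqueP c; apply/subsetP => x xS.
have [y yS yx] : exists2 y, y \in S & y != x by apply: exists_other; rewrite St.
by apply: (inH (y := y)); apply: c => //; rewrite eq_sym.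
Qed.

Lemma cliques_through_sub E : cliques_through E \subset tsets_through E.
Proof.
apply/subsetP => S; rewrite !inE => /andP[/andP[/eqP St c] ES].
by rewrite ES St eqxx clique_subset_support.
Qed.

Lemma edge_subset_support E : E \in edges g -> E \subset H.
Proof.
case/edgesP=> x [y [xy ->]]; rewrite subUset !sub1set (inH xy).
by apply: (inH (y := x)); rewrite sg.
Qed.

Lemma tsets_throughE E : E \in edges g -> tsets_through E =
  [set B :|: E | B in [set B : {set T} | (B \subset H :\: E) && (#|B| == t - 2)]].
Proof.
move=> Ee; have E2 := card_edge ir Ee; have EH := edge_subset_support Ee.
apply/setP => S; rewrite inE; apply/idP/imsetP.
  case/and3P => ES SH /eqP St; exists (S :\: E).
    rewrite inE cardsD (setIidPr ES) St E2 eqxx andbT.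
    by apply/subsetP => x; rewrite !inE => /andP[-> /(subsetP SH)].
  apply/setP => x; rewrite !inE; case: (boolP (x \in E)) => xE /=.
    by rewrite (subsetP ES).
  by case: (x \in S).
case=> B; rewrite inE => /andP[BHE /eqP Bt] ->.
have BE : B :&: E = set0.
  apply/setP => x; rewrite !inE; apply/negP => /andP[xB xE].
  by move: (subsetP BHE x xB); rewrite !inE xE.
rewrite subsetUr subUset EH andbT cardsU BE cards0 Bt E2 subn0 subnK //.
by rewrite eqxx andbT (subset_trans BHE) // subsetDl.
Qed.

Lemma card_tsets_through E :
  E \in edges g -> #|tsets_through E| = 'C(#|H| - 2, t - 2).
Proof.
move=> Ee; have EH := edge_subset_support Ee.
have -> : #|H| - 2 = #|H :\: E| by rewrite cardsD (setIidPr EH) (card_edge ir Ee).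
rewrite -cards_draws tsets_throughE //.
apply: card_in_imset => B1 B2; rewrite !inE => /andP[h1 _] /andP[h2 _] e.
apply/setP => x; case: (boolP (x \in E)) => xE.
  have n1 : x \notin B1 by apply/negP => /(subsetP h1); rewrite !inE xE.
  have n2 : x \notin B2 by apply/negP => /(subsetP h2); rewrite !inE xE.
  by rewrite (negbTE n1) (negbTE n2).
by have := congr1 (fun X : {set T} => x \in X) e; rewrite /= !inE (negbTE xE) !orbF.
Qed.

Lemma double_count : 'C(t, 2) * NK g t = \sum_(E in edges g) #|cliques_through E|.
Proof.
rewrite NKE mulnC -sum_nat_const.
transitivity (\sum_(S in cliques g t) \sum_(E in edges g) (E \subset S : nat)).
  apply: eq_bigr => S; rewrite inE => /andP[/eqP St c].
  rewrite -card_set_sum -St -cards_draws; apply: eq_card => E; rewrite !inE.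
  apply/idP/idP => /andP[h1 h2]; last by rewrite h2 (card_edge ir h1).
  rewrite h1 andbT; case/cards2P: h2 => x [y [xy eE]].
  apply/edgesP; exists x, y; split => //.
  by move/cliqueP: c; apply => //; apply: (subsetP h1); rewrite eE !inE eqxx ?orbT.
by rewrite exchange_big; apply: eq_bigr => E _; rewrite card_set_sum.
Qed.

Lemma NK_leqif_support :
  'C(t, 2) * NK g t <= #|edges g| * 'C(#|H| - 2, t - 2)
    ?= iff [forall (E | E \in edges g), cliques_through E == tsets_through E].
Proof.
have -> : #|edges g| * 'C(#|H| - 2, t - 2) = \sum_(E in edges g) #|tsets_through E|.
  by rewrite -sum_nat_const; apply: eq_bigr => E /card_tsets_through.
rewrite double_count.
by apply: leqif_sum => E _; apply: subset_leqif_cards; apply: cliques_through_sub.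
Qed.

Lemma cliques_through_clique E : is_clique g H -> cliques_through E = tsets_through E.
Proof.
move=> /cliqueP cH; apply/setP => S; rewrite !inE.
apply/andP/and3P => [[/andP[/eqP St c] ES]|[ES SH /eqP St]].
  by rewrite ES St clique_subset_support.
rewrite St eqxx ES; split=> //; apply/cliqueP => a b aS bS.
by apply: cH; apply: (subsetP SH).
Qed.

Lemma clique_of_cliques_through : 3 <= t -> t <= #|H| ->
  (forall x, x \in H -> exists y, g x y) ->
  [forall (E | E \in edges g), cliques_through E == tsets_through E] -> is_clique g H.
Proof.
move=> t3 tH nb /forall_inP full; apply/cliqueP => x y xH yH xy.
apply/negPn/negP => nxy; have [z xz] := nb x xH.
have Ee : [set x; z] \in edges g by apply/edgesP; exists x, z.
have [S [xzyS SH St]] :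
    exists S : {set T}, [/\ x |: [set z; y] \subset S, S \subset H & #|S| = t].
  apply: subset_card_between => //.
    by rewrite subUset sub1set xH subUset !sub1set yH (inH (y := x)) // sg.
  by rewrite cardsU1 cards2; case: (x \in _); case: (z != y) => /=; lia.
have : S \in cliques_through [set x; z].
  rewrite (eqP (full _ Ee)) inE SH St eqxx !andbT; apply: subset_trans xzyS.
  by apply/subsetP => w; rewrite !inE => /orP[]->; rewrite ?orbT.
rewrite !inE => /andP[/andP[_ /cliqueP c] _].
by move: nxy; rewrite c // (subsetP xzyS) // !inE eqxx ?orbT.
Qed.

Lemma NK_eq_support : 3 <= t -> t <= #|H| -> (forall x, x \in H -> exists y, g x y) ->
  ('C(t, 2) * NK g t = #|edges g| * 'C(#|H| - 2, t - 2)) <-> is_clique g H.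
Proof.
move=> t3 tH nb; split => [/eqP|cH].
  by rewrite (eq_leqif NK_leqif_support); apply: clique_of_cliques_through.
apply/eqP; rewrite (eq_leqif NK_leqif_support); apply/forall_inP => E _.
by rewrite cliques_through_clique.
Qed.

End DoubleCounting.

Lemma bin2S n : 2 * 'C(n.+2, 2) = n.+2 * n.+1.
Proof. by rewrite -mul_bin_diag /= bin1 mulnC. Qed.

Lemma bin_mul_bin2 q s : 'C(q.+2, s.+2) * 'C(s.+2, 2) = 'C(q.+2, 2) * 'C(q, s).
Proof.
have e1 := mul_bin_diag q.+2 s.+1; have e2 := mul_bin_diag q.+1 s.
have e3 := bin2S s; have e4 := bin2S q; simpl in e1, e2.
by apply/eqP; rewrite -(eqn_pmul2l (isT : 0 < 2)); apply/eqP; nia.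
Qed.

Lemma leq_pow2_ffact s a : 2 ^ s * a ^_ s <= (2 * a) ^_ s.
Proof.
elim: s => [|s IH]; first by rewrite !ffactn0.
rewrite !ffactnSr expnS.
have -> : 2 * 2 ^ s * (a ^_ s * (a - s)) = (2 ^ s * a ^_ s) * (2 * (a - s)) by nia.
by apply: leq_mul => //; lia.
Qed.

Lemma leq_pow2_bin s a : 2 ^ s * 'C(a, s) <= 'C(2 * a, s).
Proof.
by rewrite -(leq_pmul2r (fact_gt0 s)) -mulnA !bin_ffact; apply: leq_pow2_ffact.
Qed.

Lemma leq_bin_double s a b : 2 * a <= b -> s.+2 * 'C(a, s) <= 2 * 'C(b, s).
Proof.
move=> ab; apply: leq_trans (_ : 2 * (2 ^ s * 'C(a, s)) <= _).
  by rewrite mulnA -expnS leq_mul2r ltn_expl ?orbT.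
by rewrite leq_mul2l /= (leq_trans (leq_pow2_bin s a)) // leq_bin2l.
Qed.

Lemma ltn_bin_double s a b : 2 * a <= b -> 0 < s <= b ->
  s.+2 * 'C(a, s) < 2 * 'C(b, s).
Proof.
move=> ab /andP[s1 sb]; have [->|ca] := posnP 'C(a, s).
  by rewrite muln0 muln_gt0 bin_gt0 sb.
apply: leq_trans (_ : 2 * (2 ^ s * 'C(a, s)) <= _); last first.
  by rewrite leq_mul2l /= (leq_trans (leq_pow2_bin s a)) // leq_bin2l.
rewrite mulnA -expnS ltn_mul2r ca /= expnS.
by have := ltn_expl s (isT : 1 < 2); lia.
Qed.

(* For an end of degree [d] of a longest path with [m.+1] vertices and [t = s.+2],
   the left side bounds [C(t,2)] times the number of [K_t]'s through it and the
   right side is the weight of its edges. *)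
Lemma leq_bin_degree s d m : 0 < d -> 2 * d <= m.+1 ->
  'C(s.+2, 2) * 'C(d, s.+1) <= d * 'C(m.-1, s).
Proof.
move=> d1 dm; rewrite -(leq_pmul2l (isT : 0 < 2)) mulnA bin2S.
rewrite -mulnA -mul_bin_diag mulnCA [2 * (d * _)]mulnCA leq_mul2l.
by rewrite leq_bin_double ?orbT //; lia.
Qed.

Lemma ltn_bin_degree s d m : 0 < d -> 2 * d <= m.+1 -> 0 < s <= m.-1 ->
  'C(s.+2, 2) * 'C(d, s.+1) < d * 'C(m.-1, s).
Proof.
move=> d1 dm sm; rewrite -(ltn_pmul2l (isT : 0 < 2)) mulnA bin2S.
rewrite -mulnA -mul_bin_diag mulnCA [2 * (d * _)]mulnCA ltn_pmul2l //.
by rewrite ltn_bin_double //; lia.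
Qed.

Section CliqueBound.
Variables (T : finType) (t : nat).
Hypothesis t2 : 2 <= t.
Implicit Types (g : rel T) (x v : T) (s q c : seq T) (A H E : {set T}).

Definition weight g := \sum_(E in edges g) 'C(plong g E - 1, t - 2).

Definition extremal_at g x :=
  is_clique g (component g x) \/ ~~ has_path_in g (component g x) (t - 1).

Definition extremal g := forall x, extremal_at g x.

Definition clique_bound g :=
  'C(t, 2) * NK g t <= weight g /\
  (3 <= t -> 'C(t, 2) * NK g t = weight g <-> extremal g).

Lemma weight_restrict_closed g H :
  closed g H -> weight g = weight (restrict g H) + weight (restrict g (~: H)).
Proof.
move=> clH; rewrite /weight (big_edges_restrict_closed clH).
congr (_ + _); apply: eq_bigr => E; rewrite edges_restrict inE => /andP[_ EH].
  by rewrite plong_restrict_closed.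
by rewrite (plong_restrict_closed (closed_setC clH)).
Qed.

Lemma extremal_at_restrict_closed g A x :
  closed g A -> x \in A -> extremal_at (restrict g A) x <-> extremal_at g x.
Proof.
move=> clA xA; have sub := component_closed clA xA.
rewrite /extremal_at component_restrict_closed // clique_restrict //.
by rewrite has_path_in_restrict.
Qed.

Lemma extremal_at_restrict_notin g A x : x \notin A -> extremal_at (restrict g A) x.
Proof.
by move=> xA; left; rewrite component_restrict_notin // clique_set1.
Qed.

Lemma extremal_restrict_closed g H : closed g H ->
  extremal g <-> extremal (restrict g H) /\ extremal (restrict g (~: H)).
Proof.
move=> clH; have clC := closed_setC clH.
split=> [ext|[extH extC] x]; last first.
  have [xH|xH] := boolP (x \in H).
    exact: (extremal_at_restrict_closed clH xH).1 (extH x).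
  by apply: (extremal_at_restrict_closed clC _).1 (extC x); rewrite inE.
split=> x.
  have [xH|xH] := boolP (x \in H); last exact: extremal_at_restrict_notin.
  exact: (extremal_at_restrict_closed clH xH).2 (ext x).
have [xH|xH] := boolP (x \in ~: H); last exact: extremal_at_restrict_notin.
exact: (extremal_at_restrict_closed clC xH).2 (ext x).
Qed.

Lemma clique_bound_split g H : closed g H ->
  clique_bound (restrict g H) -> clique_bound (restrict g (~: H)) -> clique_bound g.
Proof.
move=> clH [le1 eq1] [le2 eq2].
rewrite /clique_bound (NK_restrict_closed clH t2) mulnDr (weight_restrict_closed clH).
split=> [|t3]; first exact: leq_add.
rewrite (extremal_restrict_closed clH) -(eq1 t3) -(eq2 t3).
by split=> [|[-> ->] //]; move: le1 le2; lia.
Qed.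

Lemma clique_bound_short g : irreflexive g ->
  (forall q, is_gpath g q -> size q < t) -> clique_bound g.
Proof.
move=> ir short; rewrite /clique_bound.
have -> : NK g t = 0.
  rewrite NKE; apply: eq_card0 => S; rewrite inE; apply/negP => /andP[/eqP St c].
  have /short : is_gpath g (enum S) by apply: clique_enum_gpath; rewrite // St; lia.
  by rewrite -cardE St ltnn.
have -> : weight g = 0.
  rewrite /weight big1 // => E Ee; apply: bin_small.
  suff : plong g E <= t - 2 by have := plong_edge_gt0 ir Ee; lia.
  by apply: plong_leq => s /short; lia.
rewrite muln0; split=> // t3; split=> // _ x; right.
by apply/negP => /existsP[u /andP[/short]]; rewrite size_tuple; lia.
Qed.

Lemma weight_setC1 g v : weight (restrict g [set~ v]) <=
  \sum_(E in edges g | v \notin E) 'C(plong g E - 1, t - 2).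
Proof.
rewrite /weight edges_restrict.
rewrite (eq_bigl (fun E => (E \in edges g) && (v \notin E))) => [|E]; last first.
  by rewrite inE subsetC sub1set inE.
apply: leq_sum => E _; apply: leq_bin2l; apply: leq_sub2r; apply: plong_subrel.
exact: restrict_sub.
Qed.

Section LowDegreeEnd.
Variables (g : rel T) (v : T) (s : seq T).
Hypotheses (sg : symmetric g) (ir : irreflexive g) (gP : is_gpath g (v :: s)).
Hypothesis longest : forall q, is_gpath g q -> size q <= (size s).+1.
Hypotheses (tm : t.-1 <= size s) (dv : 2 * #|nbr g v| <= (size s).+1).

Lemma nbr_gt0 : 0 < #|nbr g v|.
Proof.
case: s gP tm => [|y s'] gP' tm'; first by case: t t2 tm' => [|[|]].
by apply/card_gt0P; exists y; rewrite inE; case/andP: gP' => /andP[].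
Qed.

Lemma weight_edges_at : #|nbr g v| * 'C((size s).-1, t - 2) <=
  \sum_(E in edges g | v \in E) 'C(plong g E - 1, t - 2).
Proof.
rewrite -(card_edges_at v sg ir) -sum_nat_const.
rewrite (eq_bigl (fun E => (E \in edges g) && (v \in E))) => [|E]; last by rewrite inE.
apply: leq_sum => E /andP[Ee vE]; have [w [vw ->]] := edge_through sg Ee vE.
by rewrite leq_bin2l // -subn1 leq_sub2r // plong_longest_first_edge.
Qed.

Lemma cliques_at_weight :
  'C(t, 2) * #|cliques_at g t v| <= #|nbr g v| * 'C((size s).-1, t - 2) /\
  (3 <= t -> 'C(t, 2) * #|cliques_at g t v| < #|nbr g v| * 'C((size s).-1, t - 2)).
Proof.
have et1 : (t - 2).+2 = t by lia.
have et2 : (t - 2).+1 = t.-1 by lia.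
have cv : 'C(t, 2) * #|cliques_at g t v| <=
          'C((t - 2).+2, 2) * 'C(#|nbr g v|, (t - 2).+1).
  by rewrite et1 et2 leq_mul2l card_cliques_at ?orbT //; lia.
split=> [|t3]; first exact: leq_trans cv (leq_bin_degree _ nbr_gt0 dv).
by apply: leq_ltn_trans cv (ltn_bin_degree nbr_gt0 dv _); lia.
Qed.

Lemma not_extremal_low_degree : 3 <= t -> ~ extremal g.
Proof.
move=> t3 ext; have pc := path_connect (e := g) (x := v) (p := s).
have [pp uu] := andP gP.
have inC z : z \in v :: s -> z \in component g v by move=> zs; rewrite inE; apply: pc.
case: (ext v) => [/cliqueP cl|/negP []]; last first.
  by apply: has_path_in_gpath gP _ inC; rewrite /=; lia.
have sub : {subset s <= nbr g v}.
  move=> x xs; rewrite inE; apply: cl; rewrite ?inC ?mem_head ?inE ?xs ?orbT //.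
  by apply: contraTneq uu => ->; rewrite /= xs.
have := subset_leq_card (introT subsetP sub).
by move: uu; rewrite cons_uniq => /andP[_ /card_uniqP ->]; lia.
Qed.

Lemma clique_bound_low_degree :
  'C(t, 2) * NK (restrict g [set~ v]) t <= weight (restrict g [set~ v]) ->
  clique_bound g.
Proof.
move=> IH; rewrite /clique_bound; have [le lt] := cliques_at_weight.
have Wout := leq_trans IH (weight_setC1 g v).
have Win := weight_edges_at.
have -> : weight g = \sum_(E in edges g | v \notin E) 'C(plong g E - 1, t - 2) +
                     \sum_(E in edges g | v \in E) 'C(plong g E - 1, t - 2).
  by rewrite /weight (bigID (fun E => v \in E)) addnC.
rewrite (NK_setC1 _ v t2) mulnDr; split; first exact: leq_add Wout (leq_trans le Win).
move=> t3; split=> [e|/not_extremal_low_degree //].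
by move: (leq_add Wout (leq_trans (lt t3) Win)); rewrite addnS -e ltnn.
Qed.

End LowDegreeEnd.

Section Hamiltonian.
Variables (g : rel T) (H : {set T}) (c : seq T).
Hypotheses (sg : symmetric g) (ir : irreflexive g).
Hypothesis inH : forall x y, g x y -> x \in H.
Hypotheses (cy : cycle g c) (uc : uniq c) (memc : c =i H).
Hypothesis longest : forall q, is_gpath g q -> size q <= size c.
Hypothesis tc : t <= size c.

Lemma card_hamiltonian : #|H| = size c.
Proof. by rewrite -(card_uniqP uc) (eq_card memc). Qed.

Lemma weight_hamiltonian : weight g = #|edges g| * 'C(#|H| - 2, t - 2).
Proof.
rewrite /weight -sum_nat_const card_hamiltonian.
apply: eq_bigr => E /edgesP[x [y [xy ->]]].
have xc : x \in c by rewrite memc (inH xy).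
by rewrite (plong_longest_cycle sg ir cy uc longest xc xy) -subn1 -subnDA.
Qed.

Lemma component_hamiltonian x : x \in H -> component g x = H.
Proof.
have clH : closed g H by move=> a b ab; rewrite (inH ab) (inH (y := a)) // sg.
move=> xH; apply/setP => y; rewrite inE; apply/idP/idP => [/(closed_connect clH) <- //|].
by move=> yH; apply: (connect_cycle cy); rewrite memc.
Qed.

Lemma nbr_hamiltonian x : x \in H -> exists y, g x y.
Proof.
rewrite -memc => xc; have [[|y r] [cy' _ sz _]] := cycle_rot_to cy uc xc.
  by move: tc; rewrite -sz /=; lia.
by exists y; case/andP: cy'.
Qed.

Lemma extremal_hamiltonian : extremal g <-> is_clique g H.
Proof.
have c0 : c != [::] by rewrite -size_eq0 -lt0n (leq_trans _ tc) // ltnW.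
have hp : has_path_in g H (t - 1).
  by apply: has_path_in_gpath (gpath_cycle c0 cy uc) _ _ => [|z]; rewrite ?memc //; lia.
split=> [ext|cH x].
  case/lastP: c c0 memc => // r x _ /(_ x); rewrite mem_rcons mem_head => /esym xH.
  by case: (ext x); rewrite component_hamiltonian ?hp.
have [xH|xH] := boolP (x \in H); left; first by rewrite component_hamiltonian.
rewrite (component_isolated (x := x)) ?clique_set1 // => y.
by apply/negbTE/negP => /inH; apply/negP.
Qed.

Lemma clique_bound_hamiltonian : clique_bound g.
Proof.
rewrite /clique_bound weight_hamiltonian extremal_hamiltonian.
split=> [|t3]; first exact: (NK_leqif_support sg ir t2 inH).1.
by apply: NK_eq_support; rewrite ?card_hamiltonian //; apply: nbr_hamiltonian.
Qed.

End Hamiltonian.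

Lemma clique_bound_cycle_component g c : symmetric g -> irreflexive g ->
  cycle g c -> uniq c -> (forall q, is_gpath g q -> size q <= size c) ->
  t <= size c -> clique_bound (restrict g (~: [set x in c])) -> clique_bound g.
Proof.
move=> sg ir cy uc longc tc IHc.
have clH : closed g [set x in c].
  move=> a b ab; rewrite !inE; apply/idP/idP => [ac|bc].
    exact: (longest_cycle_closed sg cy uc longc ac ab).
  by apply: (longest_cycle_closed sg cy uc longc bc); rewrite sg.
apply: (clique_bound_split clH) => //.
apply: (@clique_bound_hamiltonian _ [set x in c] c) => //.
- exact: restrict_sym.
- exact: restrict_irr.
- by move=> a b /and3P[].
- by rewrite cycle_restrict // => x; rewrite inE.
- by move=> x; rewrite inE.
- by move=> q /(gpath_subrel (@restrict_sub _ _ _)); apply: longc.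
Qed.

Lemma clique_bound_simple g : symmetric g -> irreflexive g -> clique_bound g.
Proof.
have [n] := ubnP #|arcs g|; elim: n g => // n IH g ltn sg ir.
have IHr A x y : g x y -> x \notin A -> clique_bound (restrict g A).
  move=> xy xA; apply: IH (restrict_sym _ sg) (restrict_irr _ ir).
  exact: leq_trans (card_arcs_restrict xy xA) ltn.
have [x0 _|T0] := pickP (@predT T); last first.
  by apply: (clique_bound_short ir) => -[|x q] //; have := T0 x.
have [[|v s] // gP longest] := exists_longest_gpath g x0.
have [short|tm] := ltnP (size s) t.-1.
  by apply: (clique_bound_short ir) => q /longest /=; lia.
have low_end w r : is_gpath g (w :: r) -> size r = size s ->
    2 * #|nbr g w| <= (size r).+1 -> clique_bound g.
  move=> gw sr dw; have tr : t.-1 <= size r by rewrite sr.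
  have longw q : is_gpath g q -> size q <= (size r).+1 by rewrite sr; apply: longest.
  have [y] := card_gt0P (nbr_gt0 gw tr); rewrite inE => wy.
  apply: clique_bound_low_degree sg ir gw longw tr dw (IHr _ _ _ wy _).1.
  by rewrite !inE eqxx.
have [dv|dv] := leqP (2 * #|nbr g v|) (size s).+1; first exact: low_end gP _ dv.
have gR : is_gpath g (last v s :: rev (belast v s)).
  by rewrite -rev_rcons -lastI gpath_rev.
have [du|du] := leqP (2 * #|nbr g (last v s)|) (size s).+1.
  by apply: low_end gR _ _; rewrite size_rev size_belast.
have [c [cy pc]] := longest_gpath_cycle sg ir gP longest dv du.
have uc : uniq c by rewrite (perm_uniq pc); case/andP: gP.
have longc q : is_gpath g q -> size q <= size c by rewrite (perm_size pc); apply: longest.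
have vc : v \in c by rewrite (perm_mem pc) mem_head.
have /card_gt0P[y] : 0 < #|nbr g v| by lia.
rewrite inE => vy; apply: (clique_bound_cycle_component sg ir cy uc longc).
  by rewrite (perm_size pc) /=; lia.
by apply: IHr vy _; rewrite !inE vc.
Qed.

End CliqueBound.

Import GRing.Theory Num.Theory.
Local Open Scope ring_scope.

Lemma bin_ratio (R : numFieldType) p t : (0 < p)%N -> (2 <= t)%N ->
  'C(p + 1, t)%:R / 'C(p + 1, 2)%:R = ('C(t, 2)%:R)^-1 * 'C(p - 1, t - 2)%:R :> R.
Proof.
move=> p1 t2; have ep : (p + 1 = (p - 1).+2)%N by lia.
have et : t = (t - 2).+2 by lia.
have b2 : 'C(p + 1, 2)%:R != 0 :> R by rewrite pnatr_eq0 -lt0n bin_gt0 ep.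
have bt : 'C(t, 2)%:R != 0 :> R by rewrite pnatr_eq0 -lt0n bin_gt0.
rewrite [RHS]mulrC; apply/eqP; rewrite eqr_div // -!natrM eqr_nat.
by rewrite ep {1 2}et bin_mul_bin2 mulnC.
Qed.

Theorem theorem3 (T : finType) (g : rel T) (t : nat) :
  simple_graph g -> (2 <= t)%N ->
  let S1 : rat := \sum_(E in edges g)
        ('C(plong g E + 1, t)%:R / 'C(plong g E + 1, 2)%:R) in
  let S2 : rat := ('C(t, 2)%:R)^-1 *
        \sum_(E in edges g) 'C(plong g E - 1, t - 2)%:R in
  [/\ (NK g t)%:R <= S1,
      S1 = S2,
      t = 2%N -> (NK g t)%:R = S1
    & (3 <= t)%N ->
      ((NK g t)%:R = S1 <->
       (forall x : T, is_clique g (component g x) \/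
                      ~~ has_path_in g (component g x) (t - 1)))].
Proof.
move=> [sg ir] t2 S1 S2.
have [le eq] := clique_bound_simple t2 sg ir.
have e12 : S1 = S2.
  rewrite /S1 /S2 mulr_sumr; apply: eq_bigr => E Ee.
  by rewrite bin_ratio // plong_edge_gt0.
have cnz : 'C(t, 2)%:R != 0 :> rat by rewrite pnatr_eq0 -lt0n bin_gt0.
have eS : S1 = ('C(t, 2)%:R)^-1 * (weight t g)%:R by rewrite e12 /S2 /weight natr_sum.
have eN : (NK g t)%:R = ('C(t, 2)%:R)^-1 * ('C(t, 2) * NK g t)%:R :> rat.
  by rewrite natrM mulKf.
have eqiff : (NK g t)%:R = S1 <-> ('C(t, 2) * NK g t = weight t g)%N.
  by rewrite eS eN; split=> [/(mulfI (invr_neq0 cnz))/eqP|->] //; rewrite eqr_nat => /eqP.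
split=> //.
- by rewrite eS eN ler_pM2l ?invr_gt0 ?ltr0n ?bin_gt0 // ler_nat.
- move=> t2E; apply/eqiff; rewrite t2E NK_edges // mul1n /weight.
  by rewrite (eq_bigr (fun _ => 1%N)) => [|E _]; rewrite ?sum1_card ?bin0.
- by move=> t3; rewrite eqiff; apply: eq.
Qed.
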